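(* Let $n>3$ and let $A=[A_1,\ldots,A_n]$ be an $n\times n\times n$ ASHM in which every line contains at most one entry equal to $-1$ (a near-permutation hypermatrix). Then $L(A)=1A_1+\cdots+nA_n$ has no constant row and no constant column.
   Context: An $n\times n$ alternating sign matrix (ASM) is an $n\times n$ matrix with entries in $\{0,1,-1\}$ such that in every row and column the nonzeros alternate in sign, beginning and ending with $+1$. An $n\times n\times n$ hypermatrix $A=[a_{ijk}]$ is written $A=[A_1,\ldots,A_n]$ with $A_k=[a_{ijk}]_{i,j}$; lines are obtained by fixing two of the three indices. $A$ is an ASHM if all entries lie in $\{0,\pm1\}$ and in every line the nonzeros alternate in sign beginning and ending with $+1$. A line of a matrix is constant if all its entries are equal. *)

From mathcomp Require Import all_boot all_order all_algebra.
Set Implicit Arguments. Unset Strict Implicit. Unset Printing Implicit Defensive.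
Import Order.TTheory GRing.Theory Num.Theory.
Local Open Scope ring_scope.

(* An n x n x n hypermatrix with integer entries: A i j k = a_{ijk}
   (indices 0-based; the paper's index k corresponds to k+1). *)
Definition hmx (n : nat) := 'I_n -> 'I_n -> 'I_n -> int.

Definition alt_sign_seq (s : seq int) : bool :=
  let t := [seq x <- s | x != 0] in
  [&& all (fun x => (x == 0) || (x == 1) || (x == -1)) s,
      t != [::],
      head 0 t == 1,
      last 0 t == 1 &
      all (fun p => p.1 == - p.2) (zip t (behead t))].

Definition line1 n (A : hmx n) (j k : 'I_n) : seq int := [seq A i j k | i <- enum 'I_n].
Definition line2 n (A : hmx n) (i k : 'I_n) : seq int := [seq A i j k | j <- enum 'I_n].
Definition line3 n (A : hmx n) (i j : 'I_n) : seq int := [seq A i j k | k <- enum 'I_n].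

Definition is_ASHM n (A : hmx n) : Prop :=
  (forall j k, alt_sign_seq (line1 A j k)) /\
  (forall i k, alt_sign_seq (line2 A i k)) /\
  (forall i j, alt_sign_seq (line3 A i j)).

Definition near_perm n (A : hmx n) : Prop :=
  (forall j k, (count (pred1 (-1 : int)) (line1 A j k) <= 1)%N) /\
  (forall i k, (count (pred1 (-1 : int)) (line2 A i k) <= 1)%N) /\
  (forall i j, (count (pred1 (-1 : int)) (line3 A i j) <= 1)%N).

Definition LA n (A : hmx n) : 'M[int]_n :=
  \matrix_(i, j) \sum_(k < n) (k.+1)%:Z * A i j k.

Definition const_row n (M : 'M[int]_n) (i : 'I_n) : Prop :=
  forall j j' : 'I_n, M i j = M i j'.
Definition const_col n (M : 'M[int]_n) (j : 'I_n) : Prop :=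
  forall i i' : 'I_n, M i j = M i' j.

From mathcomp Require Import all_boot all_order all_algebra.
Import Order.TTheory GRing.Theory Num.Theory.
Local Open Scope ring_scope.
Set Implicit Arguments. Unset Strict Implicit. Unset Printing Implicit Defensive.

(* Fix a row i of L(A) and look at the slice B = [a_{ijk}]_{j,k}: its lines
   in both directions alternate and L(A)_{ij} = sum_k (k+1) B_{jk}.  The ends
   of an alternating line are never -1, so the first and last rows of B have
   no -1 and hence are unit vectors e_a, e_b; a constant row of L(A) forces
   a = b.  A -1 in the second row of B must sit below a 1, i.e. in column a;
   without a -1 the second row would be a unit vector e_a, putting two
   adjacent 1s in column a.  Hence B_{2a} = -1 and symmetrically
   B_{n-1,a} = -1, two -1s in one line since n > 3.  Columns of L(A) are
   handled by the same argument with i and j exchanged. *)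

Lemma all_zip_behead_cat (P : pred (int * int)) (u w : seq int) a b :
  all P (zip (u ++ a :: b :: w) (behead (u ++ a :: b :: w))) -> P (a, b).
Proof.
elim: u => [|x u IHu] /=; first by case/andP.
by case: u IHu => [|y u] IHu /= /andP[_]; apply: IHu.
Qed.

Lemma alt_sign_head (x y : int) w :
  alt_sign_seq (x :: y :: w) -> x != -1 /\ (y = -1 -> x = 1).
Proof.
case/and5P => _ _ + _ _ /=.
case: (eqVneq x 0) => [-> /= hd | nx]; last by rewrite /= nx /= => /eqP ->.
by split=> // ey; move: hd; rewrite ey.
Qed.

Lemma alt_sign_last (u : seq int) y x :
  alt_sign_seq (u ++ [:: y; x]) -> x != -1 /\ (y = -1 -> x = 1).
Proof.
case/and5P => _ _ _ + _; rewrite filter_cat last_cat /=.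
case: (eqVneq x 0) => [-> /= hd | _]; first by split=> // ey; move: hd; rewrite ey.
by case: (y != 0) => /= /eqP ->.
Qed.

Lemma alt_sign_no_adjacent_ones (u w : seq int) : ~ alt_sign_seq (u ++ 1 :: 1 :: w).
Proof. by case/and5P => _ _ _ _; rewrite filter_cat /= => /all_zip_behead_cat. Qed.

Lemma alt_sign_nonzero_one (s : seq int) :
  alt_sign_seq s -> -1 \notin s -> [seq x <- s | x != 0] = [:: 1].
Proof.
case/and5P => /allP s_sign + + _ + s_pos.
have : all (pred1 1) [seq x <- s | x != 0].
  apply/allP => x; rewrite mem_filter => /andP[x_nz xs].
  have := s_sign x xs; rewrite /= -orbA => /or3P[] /eqP ex //; subst x => //.
  by rewrite xs in s_pos.
case: [seq x <- s | x != 0] => [|a [|b t]] //=; first by case/andP => /eqP ->.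
by case/and3P => /eqP -> /eqP ->.
Qed.

Lemma count_enum_card (T : finType) (p : pred T) : count p (enum T) = #|p|.
Proof. by rewrite cardE /enum_mem size_filter count_filter; apply: eq_count => x; rewrite /= andbT. Qed.

Lemma weighted_sum_unit n (f : 'I_n -> int) a :
  f a = 1 -> (forall k, k != a -> f k = 0) ->
  \sum_(k < n) (k.+1)%:Z * f k = (a.+1)%:Z.
Proof.
move=> fa f0; rewrite (bigD1 a) //= big1 ?addr0 ?fa ?mulr1 // => k /f0 ->.
exact: mulr0.
Qed.

Section AlternatingLine.

Variables (n : nat) (f : 'I_n -> int).
Let s := [seq f k | k <- enum 'I_n].

Lemma line_split (i j : 'I_n) :
  val j = (val i).+1 -> s = take i s ++ f i :: f j :: drop j.+1 s.
Proof.
move=> ej; have nth_s (k : 'I_n) : nth 0 s k = f k.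
  by rewrite (nth_map k) ?size_enum_ord ?nth_ord_enum.
have ltj : (val j < size s)%N by rewrite /s size_map size_enum_ord ltn_ord.
have lti : (val i < size s)%N by rewrite (ltn_trans _ ltj) // ej.
by rewrite -[f j]nth_s -drop_nth // ej -[f i]nth_s -drop_nth // cat_take_drop.
Qed.

Hypothesis f_alt : alt_sign_seq s.

Lemma line_no_adjacent_ones (i j : 'I_n) : val j = (val i).+1 -> f i = 1 -> f j = 1 -> False.
Proof. by move=> ej fi fj; move: f_alt; rewrite (line_split ej) fi fj => /alt_sign_no_adjacent_ones. Qed.

Lemma line_first (i j : 'I_n) :
  val i = 0%N -> val j = 1%N -> f i != -1 /\ (f j = -1 -> f i = 1).
Proof.
move=> ei ej; have ej' : val j = (val i).+1 by rewrite ei ej.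
by move: f_alt; rewrite (line_split ej') ei take0 => /alt_sign_head.
Qed.

Lemma line_last (i j : 'I_n) :
  val j = (val i).+1 -> (val j).+1 = n -> f j != -1 /\ (f i = -1 -> f j = 1).
Proof.
move=> ej jn; move: f_alt; rewrite (line_split ej) drop_oversize.
  exact: alt_sign_last.
by rewrite size_map size_enum_ord jn.
Qed.

Lemma line_unit : (forall k, f k != -1) -> exists a, f a = 1 /\ forall k, k != a -> f k = 0.
Proof.
move=> f_neg; have /alt_sign_nonzero_one : -1 \notin [seq f k | k <- enum 'I_n].
  by apply/mapP => -[k _ /esym/eqP]; rewrite (negbTE (f_neg k)).
move=> /(_ f_alt) nz; have := congr1 size nz.
rewrite size_filter count_map count_enum_card => /eqP/card1P[a ha].
have fa : f a \in [seq x <- [seq f k | k <- enum 'I_n] | x != 0].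
  by rewrite mem_filter map_f ?mem_enum // andbT; move: (ha a); rewrite !inE eqxx.
exists a; split; first by move: fa; rewrite nz inE => /eqP.
by move=> k nka; apply/eqP; move: (ha k); rewrite !inE (negbTE nka) => /negbT; rewrite negbK.
Qed.

End AlternatingLine.

(* Applied to the first two rows [f0], [f1] of a slice. *)
Lemma neighbour_row_neg n (f0 f1 : 'I_n -> int) a :
  alt_sign_seq [seq f1 k | k <- enum 'I_n] ->
  (forall q, f1 q = -1 -> f0 q = 1) ->
  f0 a = 1 -> (forall k, k != a -> f0 k = 0) -> f1 a != 1 ->
  \sum_(k < n) (k.+1)%:Z * f1 k = (a.+1)%:Z -> f1 a = -1.
Proof.
move=> f1_alt f1_neg f0a f0_0 f1a1 f1_sum.
case: (pickP (fun q => f1 q == -1)) => [q /eqP f1q | f1_noneg].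
  by case: (eqVneq q a) => [<- // | nqa]; move: (f1_neg q f1q); rewrite f0_0.
have [c [f1c f1_0]] := line_unit f1_alt (fun k => negbT (f1_noneg k)).
move: f1_sum; rewrite (weighted_sum_unit f1c f1_0) => -[/val_inj eca].
by rewrite -eca f1c eqxx in f1a1.
Qed.

Section Slice.

Variables (m : nat) (B : 'I_m.+4 -> 'I_m.+4 -> int).
Hypothesis col_alt : forall k, alt_sign_seq [seq B j k | j <- enum 'I_m.+4].
Hypothesis row_alt : forall j, alt_sign_seq [seq B j k | k <- enum 'I_m.+4].
Hypothesis col_near_perm :
  forall k, (count (pred1 (-1 : int)) [seq B j k | j <- enum 'I_m.+4] <= 1)%N.

Let weight j := \sum_(k < m.+4) (k.+1)%:Z * B j k.

Lemma slice_weight_not_const : ~ (forall j j', weight j = weight j').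
Proof.
move=> weight_eq.
pose top : 'I_m.+4 := ord0; pose second : 'I_m.+4 := inord 1.
pose penult : 'I_m.+4 := inord m.+2; pose bottom : 'I_m.+4 := ord_max.
have v_second : val second = 1%N by rewrite /= inordK.
have v_penult : val bottom = (val penult).+1 by rewrite /= inordK.
have [a [top_1 top_0]] : exists a, B top a = 1 /\ forall k, k != a -> B top k = 0.
  by apply: line_unit => // k; apply: (line_first (i := top) (col_alt k) erefl v_second).1.
have [b [bottom_1 bottom_0]] : exists b, B bottom b = 1 /\ forall k, k != b -> B bottom k = 0.
  by apply: line_unit => // k; apply: (line_last (col_alt k) v_penult erefl).1.
have weight_top : weight top = (a.+1)%:Z by apply: weighted_sum_unit.
have eab : a = b.
  apply: val_inj; move: (weight_eq top bottom); rewrite weight_top.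
  by rewrite /weight (weighted_sum_unit bottom_1 bottom_0) => -[].
subst b.
have second_a : B second a = -1.
  apply: (neighbour_row_neg (row_alt second) _ top_1 top_0).
  - by move=> q; apply: (line_first (i := top) (col_alt q) erefl v_second).2.
  - by apply/eqP; apply: (line_no_adjacent_ones (i := top) (col_alt a) v_second top_1).
  - by rewrite -weight_top; apply: weight_eq.
have penult_a : B penult a = -1.
  apply: (neighbour_row_neg (row_alt penult) _ bottom_1 bottom_0).
  - by move=> q; apply: (line_last (col_alt q) v_penult erefl).2.
  - by apply/eqP => penult_1; apply: (line_no_adjacent_ones (col_alt a) v_penult penult_1).
  - by rewrite -weight_top; apply: weight_eq.
move: (col_near_perm a); rewrite count_map count_enum_card leqNgt => /negP; apply.
apply/card_gt1P; exists second, penult; rewrite !inE second_a penult_a; split => //.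
by apply/eqP => /(congr1 val); rewrite v_second /= inordK.
Qed.

End Slice.

Theorem mainTheorem6 (n : nat) (A : hmx n) :
  (3 < n)%N -> is_ASHM A -> near_perm A ->
  (forall i : 'I_n, ~ const_row (LA A) i) /\
  (forall j : 'I_n, ~ const_col (LA A) j).
Proof.
case: n A => [|[|[|[|m]]]] A // _ [line1_alt [line2_alt line3_alt]] [line1_near [line2_near _]].
split=> [i row_const | j col_const].
- apply: (@slice_weight_not_const m (A i) (line2_alt i) (line3_alt i) (line2_near i)).
  by move=> j j'; move: (row_const j j'); rewrite !mxE.
- apply: (@slice_weight_not_const m (fun i => A i j) (line1_alt j) (line3_alt^~ j) (line1_near j)).
  by move=> i i'; move: (col_const i i'); rewrite !mxE.
Qed.
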